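(* Let $\mathbb K$ be algebraically closed of characteristic zero, $T$ a torus with Lie algebra $\mathfrak t$, $V$ a finite-dimensional $T$-module, and $\mu:V\oplus V^*\to\mathfrak t^*$, $\mu(x,y)(\xi)=y(\xi\cdot x)$. If $(x,y)\in\mu^{-1}(0)$ is such that $T\cdot x$ is closed in $V$ and $T\cdot y$ is closed in $V^*$, then $T\cdot(x,y)$ is closed in $V\oplus V^*$. *)

From mathcomp Require Import all_boot all_algebra.
From mathcomp Require Import mpoly.
Set Implicit Arguments. Unset Strict Implicit. Unset Printing Implicit Defensive.
Import GRing.Theory.
Local Open Scope ring_scope.

Definition torus_pt (K : fieldType) (r : nat) (t : 'I_r -> K) : Prop :=
  forall k, t k != 0.

Definition char_val (K : fieldType) (r : nat) (chi : 'I_r -> int) (t : 'I_r -> K) : K :=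
  \prod_(k < r) (t k) ^ (chi k).

(* A rational (algebraic) map T -> 'M_n: entries lie in K[T] = span of the
   characters, i.e. rho(t) = sum_j t^(c j) A_j. *)
Definition rep_mx (K : fieldType) (r m n : nat) (c : 'I_m -> 'I_r -> int)
  (A : 'I_m -> 'M[K]_n) (t : 'I_r -> K) : 'M[K]_n :=
  \sum_(j < m) char_val (c j) t *: A j.

Definition is_rational_rep (K : fieldType) (r m n : nat) (c : 'I_m -> 'I_r -> int)
  (A : 'I_m -> 'M[K]_n) : Prop :=
  rep_mx c A (fun _ => 1) = 1%:M /\
  forall s t, torus_pt s -> torus_pt t ->
    rep_mx c A (fun k => s k * t k) = rep_mx c A s *m rep_mx c A t.

(* Differential of rho at the identity: the action of xi in t = K^r
   (d/d eps of t^chi at 1 in direction xi is sum_k chi_k xi_k). *)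
Definition lie_act (K : fieldType) (r m n : nat) (c : 'I_m -> 'I_r -> int)
  (A : 'I_m -> 'M[K]_n) (xi : 'I_r -> K) : 'M[K]_n :=
  \sum_(j < m) (\sum_(k < r) (c j k)%:~R * xi k) *: A j.

Definition moment_map (K : fieldType) (r m n : nat) (c : 'I_m -> 'I_r -> int)
  (A : 'I_m -> 'M[K]_n) (x : 'cV[K]_n) (y : 'rV[K]_n) (xi : 'I_r -> K) : K :=
  (y *m lie_act c A xi *m x) 0 0.

Definition zariski_closed (K : fieldType) (N : nat) (S : ('I_N -> K) -> Prop) : Prop :=
  exists P : {mpoly K[N]} -> Prop,
    forall v, S v <-> (forall p, P p -> p.@[v] = 0).

Definition orbit_V (K : fieldType) (r m n : nat) (c : 'I_m -> 'I_r -> int)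
  (A : 'I_m -> 'M[K]_n) (x : 'cV[K]_n) : ('I_n -> K) -> Prop :=
  fun v => exists t, torus_pt t /\ forall i, v i = (rep_mx c A t *m x) i 0.

(* Orbit T.y in V^* for the contragredient action (t.y)(v) = y(t^-1 v). *)
Definition orbit_Vdual (K : fieldType) (r m n : nat) (c : 'I_m -> 'I_r -> int)
  (A : 'I_m -> 'M[K]_n) (y : 'rV[K]_n) : ('I_n -> K) -> Prop :=
  fun v => exists t, torus_pt t /\
    forall i, v i = (y *m rep_mx c A (fun k => (t k)^-1)) 0 i.

Definition orbit_VVdual (K : fieldType) (r m n : nat) (c : 'I_m -> 'I_r -> int)
  (A : 'I_m -> 'M[K]_n) (x : 'cV[K]_n) (y : 'rV[K]_n) : ('I_(n + n) -> K) -> Prop :=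
  fun v => exists t, torus_pt t /\
    (forall i, v (lshift n i) = (rep_mx c A t *m x) i 0) /\
    (forall i, v (rshift n i) = (y *m rep_mx c A (fun k => (t k)^-1)) 0 i).

From mathcomp Require Import all_boot all_algebra.
From mathcomp Require Import mpoly.
From mathcomp Require Import zify.
Set Implicit Arguments. Unset Strict Implicit. Unset Printing Implicit Defensive.
Import GRing.Theory.
Local Open Scope ring_scope.

(* Let u lie in the Zariski closure of T.(x, y).  Its
   two halves lie in the closed orbits T.x and T.y, so u = (s.x, s'.y).  Every
   coordinate L of a weight component of V (+) V^* satisfies
   L(t.(x, y)) = t^chi L(x, y), so an integer relation between the characters of
   the coordinates that do not vanish at (x, y) gives a binomial equation that
   holds on the orbit, hence at u, where these coordinates do not vanish either.
   By the Smith normal form over Z and the existence of roots in K, the system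
   L(u) = t^chi L(x, y) has a solution t in T, and then u = t.(x, y) because a
   vector is determined by its weight components. *)

Section Characters.
Variables (K : fieldType) (r : nat).
Implicit Types (s t : 'I_r -> K) (a : 'I_r -> int).

Lemma torus_ptV t : torus_pt t -> torus_pt (fun k => (t k)^-1).
Proof. by move=> tT k; rewrite invr_eq0. Qed.

Lemma char_val_neq0 a t : torus_pt t -> char_val a t != 0.
Proof. by move=> tT; apply/prodf_neq0 => k _; apply: expfz_neq0. Qed.

Lemma char_val1 a : char_val a (fun _ => 1 : K) = 1.
Proof. by apply: big1 => k _; rewrite exp1rz. Qed.

Lemma char_valM a s t :
  char_val a (fun k => s k * t k) = char_val a s * char_val a t.
Proof. by rewrite /char_val -big_split; apply: eq_bigr => k _; rewrite expfzMl. Qed.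

Lemma char_valN a t : char_val (fun k => - a k) t = char_val a (fun k => (t k)^-1).
Proof. by apply: eq_bigr => k _; rewrite exprz_inv. Qed.

Lemma char_val_relation (I : finType) (mu : I -> int) (w : I -> 'I_r -> int) t :
  torus_pt t -> (forall k, \sum_i mu i * w i k = 0) ->
  \prod_i char_val (w i) t ^ mu i = 1.
Proof.
move=> tT rel; rewrite /char_val.
under eq_bigr => i _ do
  rewrite (big_morph (fun z => z ^ mu i) (fun u v => expfzMl u v _) (exp1rz _ _)).
rewrite exchange_big big1 //= => k _.
under eq_bigr => i _ do rewrite exprz_exp mulrC.
by rewrite -(big_morph _ (fun u v => expfzDr u v (tT k)) (expr0z _)) rel expr0z.
Qed.

End Characters.

Section MonomialMaps.
Variable K : fieldType.

Definition monomial_map p q (Q : 'M[int]_(p, q)) (u : 'I_q -> K) : 'I_p -> K :=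
  fun i => \prod_k u k ^ Q i k.

Lemma monomial_map_torus p q (Q : 'M[int]_(p, q)) u :
  torus_pt u -> torus_pt (monomial_map Q u).
Proof. by move=> uT i; apply/prodf_neq0 => k _; apply: expfz_neq0. Qed.

Lemma monomial_map_ext p q (Q : 'M[int]_(p, q)) u v :
  u =1 v -> monomial_map Q u =1 monomial_map Q v.
Proof. by move=> uv i; apply: eq_bigr => k _; rewrite uv. Qed.

Lemma monomial_mapM p q l (Q1 : 'M[int]_(p, q)) (Q2 : 'M[int]_(q, l)) u :
  torus_pt u ->
  monomial_map (Q1 *m Q2) u =1 monomial_map Q1 (monomial_map Q2 u).
Proof.
move=> uT i; rewrite /monomial_map.
under [RHS]eq_bigr => j _ do rewrite
  (big_morph (fun a => a ^ Q1 i j) (fun a b => expfzMl a b _) (exp1rz _ _)).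
rewrite exchange_big /=; apply: eq_bigr => k _.
rewrite mxE.
rewrite (big_morph (fun e : int => u k ^ e) (fun a b => expfzDr a b (uT k)) (expr0z _)).
by apply: eq_bigr => j _; rewrite exprz_exp mulrC.
Qed.

Lemma monomial_map1 q u : monomial_map (1%:M : 'M[int]_q) u =1 u.
Proof.
move=> i; rewrite /monomial_map (bigD1 i) //= big1 => [|k /negPf ki].
  by rewrite mxE eqxx mulr1.
by rewrite mxE eq_sym ki expr0z.
Qed.

Lemma monomial_mapVK p (Q : 'M[int]_p) u : Q \in unitmx -> torus_pt u ->
  monomial_map Q (monomial_map (invmx Q) u) =1 u.
Proof. by move=> Qu uT i; rewrite -monomial_mapM // mulmxV // monomial_map1. Qed.

End MonomialMaps.

Section BinomialSystems.
Variable K : closedFieldType.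

Lemma exprz_root (d : int) (a : K) : d != 0 -> a != 0 ->
  exists2 z : K, z != 0 & z ^ d = a.
Proof.
have nat_root n (b : K) : (0 < n)%N -> b != 0 -> exists2 z : K, z != 0 & z ^+ n = b.
  move=> n_gt0 b0; have /closed_rootP[z /rootP] : size ('X^n - b%:P) != 1.
    by rewrite size_XnsubC // eqSS -lt0n.
  rewrite !hornerE => /eqP; rewrite subr_eq0 => /eqP zn; exists z => //.
  by apply: contraNneq b0 => z0; rewrite -zn z0 expr0n gtn_eqF.
case: (intP d) => [|k|k] // _ a0.
  by have [z z0 zk] := nat_root k.+1 a isT a0; exists z; rewrite // -exprnP.
have [z z0 zk] := nat_root k.+1 a^-1 isT (invr_neq0 a0).
by exists z; rewrite // -invr_expz -exprnP zk invrK.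
Qed.

Lemma monomial_map_diag_surj p q (d : seq int) (v : 'I_p -> K) :
  let D : 'M[int]_(p, q) := \matrix_(i, j) (d`_i *+ (i == j :> nat)) in
  torus_pt v -> (forall i, row i D = 0 -> v i = 1) ->
  exists2 u, torus_pt u & monomial_map D u =1 v.
Proof.
move=> D vT v1.
have D_diag i k : D i k != 0 -> i = k :> nat.
  by rewrite mxE; have [//|_] := eqVneq (i : nat) k; rewrite mulr0n eqxx.
have col_root k : exists2 z : K, z != 0 & forall i, D i k != 0 -> z ^ D i k = v i.
  case: (pickP (fun i => D i k != 0)) => [i Dik | D0]; last first.
    by exists 1 => [|i]; rewrite ?oner_neq0 ?D0.
  have [z z0 zD] := exprz_root Dik (vT i); exists z => // i' Di'k.
  by have -> : i' = i by apply: val_inj; rewrite /= (D_diag _ _ Di'k) (D_diag _ _ Dik).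
have [u uT uD] := fin_all_exists2 col_root.
exists u => // i.
have [Di0 | ] := eqVneq (row i D) 0.
  rewrite v1 //; apply: big1 => k _.
  by move/matrixP/(_ 0 k): Di0; rewrite !mxE => ->; rewrite expr0z.
case/matrix0Pn => i0 [k]; rewrite mxE => Dik.
rewrite /monomial_map (bigD1 k) //= big1 ?mulr1; first exact: uD.
move=> k' k'k; have [-> | Dik'] := eqVneq (D i k') 0; first exact: expr0z.
case/eqP: k'k; apply: val_inj.
by rewrite /= -(D_diag _ _ Dik') (D_diag _ _ Dik).
Qed.

Lemma monomial_map_surj p q (Q : 'M[int]_(p, q)) (v : 'I_p -> K) :
  torus_pt v ->
  (forall mu : 'rV[int]_p, mu *m Q = 0 -> \prod_i v i ^ mu 0 i = 1) ->
  exists2 t, torus_pt t & monomial_map Q t =1 v.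
Proof.
move=> vT rel.
(* Q = L D R reduces the system to the diagonal one D u = L^-1 v. *)
have [L Lu [R Ru [d _ defQ]]] := int_Smith_normal_form Q.
set D := \matrix_(i, j) _ in defQ.
pose v' := monomial_map (invmx L) v.
have v'1 i : row i D = 0 -> v' i = 1.
  move=> Di0; have /rel : row i (invmx L) *m Q = 0.
    by rewrite defQ !mulmxA -row_mul mulVmx // -row_mul mul1mx Di0 mul0mx.
  by under eq_bigr => k _ do rewrite mxE.
have [u uT Du] := monomial_map_diag_surj (monomial_map_torus (invmx L) vT) v'1.
have tT := monomial_map_torus (invmx R) uT.
exists (monomial_map (invmx R) u) => // i.
have RtE := monomial_mapVK Ru uT.
rewrite defQ monomial_mapM // monomial_mapM; last exact: monomial_map_torus.
rewrite (monomial_map_ext _ (monomial_map_ext _ RtE)) (monomial_map_ext _ Du).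
exact: monomial_mapVK.
Qed.

Lemma char_system_solvable r (I : finType) (w : I -> 'I_r -> int) (cv : I -> K) :
  (forall i, cv i != 0) ->
  (forall mu : I -> int, (forall k, \sum_i mu i * w i k = 0) ->
     \prod_i cv i ^ mu i = 1) ->
  exists2 t, torus_pt t & forall i, char_val (w i) t = cv i.
Proof.
move=> cv0 rel.
pose Q : 'M[int]_(#|I|, r) := \matrix_(i, k) w (enum_val i) k.
have [t tT Qt] : exists2 t, torus_pt t & monomial_map Q t =1 cv \o enum_val.
  apply: monomial_map_surj => [i | mu muQ]; first exact: cv0.
  have rank_bij := onW_bij [pred i | true] (@enum_rank_bij I).
  rewrite (reindex _ rank_bij) /=; under eq_bigr => i _ do rewrite enum_rankK.
  apply: rel => k; transitivity ((mu *m Q) 0 k); last by rewrite muQ mxE.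
  rewrite mxE (reindex _ rank_bij).
  by apply: eq_bigr => i _; rewrite /Q mxE enum_rankK.
exists t => // i; have := Qt (enum_rank i); rewrite /= enum_rankK => <-.
by apply: eq_bigr => k _; rewrite /Q mxE enum_rankK.
Qed.

End BinomialSystems.

Lemma base_digits_eq0 (b : int) r (d : 'I_r -> int) : 0 < b ->
  (forall k, - b < d k < b) -> \sum_k d k * b ^+ k = 0 -> forall k, d k = 0.
Proof.
move=> b_gt0; elim: r d => [|r IH] d d_small d0 k; first by case: k.
move: d0; rewrite big_ord_recl /= expr0 mulr1.
under eq_bigr => i _ do rewrite /bump /= add1n exprS mulrCA.
rewrite -mulr_sumr; set S := \sum_(i < r) _ => d0.
have S0 : S = 0.
  move: (d_small ord0) d0 b_gt0; clear; move: (d ord0) => x; nia.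
have := IH (fun i => d (lift ord0 i)) (fun i => d_small _) S0.
by case: (unliftP ord0 k) => [k' ->|->] // _; move: d0; rewrite S0 mulr0 addr0.
Qed.

Definition weight_eq r m (c : 'I_m -> 'I_r -> int) j j' := [forall k, c j k == c j' k].

Section CharacterIndependence.
Variable K : closedFieldType.

Lemma exprz_indep m (e : 'I_m -> int) (a : 'I_m -> K) :
  (forall z, z != 0 -> \sum_j a j * z ^ e j = 0) ->
  forall e0, \sum_(j | e j == e0) a j = 0.
Proof.
move=> vanish e0.
pose E := (\sum_j `|e j|)%N.
have shift_ge0 j : 0 <= e j + E%:Z.
  have : (`|e j| <= E)%N by rewrite /E (bigD1 j) //= leq_addr.
  lia.
pose f j := absz (e j + E%:Z).
have fE j : (f j)%:Z = e j + E%:Z by apply: gez0_abs.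
pose p : {poly K} := \sum_j a j *: 'X^(f j).
(* p.[z] = z ^+ E * \sum_j a j * z ^ e j, so X * p vanishes on all of K. *)
have p0 : p = 0.
  suff : 'X * p == 0 by rewrite mulf_eq0 polyX_eq0 => /eqP.
  apply: contraT => /closed_nonrootP[z /negP[]]; apply/rootP.
  rewrite hornerM hornerX; have [->|z0] := eqVneq z 0; first by rewrite mul0r.
  apply/eqP; rewrite mulf_eq0 (negPf z0) /=; apply/eqP.
  rewrite horner_sum; transitivity (z ^+ E * \sum_j a j * z ^ e j).
    2: by rewrite vanish ?mulr0.
  rewrite mulr_sumr; apply: eq_bigr => j _; rewrite hornerZ hornerXn mulrCA.
  by congr (_ * _); rewrite exprnP fE expfzDr // mulrC.
have [j0 /eqP ej0 | none] := pickP (fun j => e j == e0); last by rewrite big_pred0.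
transitivity p`_(f j0); last by rewrite p0 coef0.
rewrite /p coef_sum big_mkcond /=; apply: eq_bigr => j _.
rewrite coefZ coefXn -eqz_nat !fE (inj_eq (addIr _)) ej0 [e0 == _]eq_sym.
by case: eqP; rewrite ?mulr1 ?mulr0.
Qed.

Lemma char_val_powers r (a : 'I_r -> int) (b : int) (z : K) : z != 0 ->
  char_val a (fun k => z ^ (b ^+ k)) = z ^ (\sum_k a k * b ^+ k).
Proof.
move=> z0.
rewrite (big_morph (fun u : int => z ^ u) (fun u v => expfzDr u v z0) (expr0z _)).
by apply: eq_bigr => k _; rewrite exprz_exp mulrC.
Qed.

(* Substituting t_k = z ^ b ^ k, with b larger than twice every exponent, sends
   distinct characters to distinct powers of z. *)
Lemma char_val_indep r m (c : 'I_m -> 'I_r -> int) (a : 'I_m -> K) :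
  (forall t, torus_pt t -> \sum_j a j * char_val (c j) t = 0) ->
  forall j0, \sum_(j | weight_eq c j j0) a j = 0.
Proof.
move=> vanish j0.
pose B := (\sum_j \sum_k `|c j k|)%N.
have cB j k : (`|c j k| <= B)%N.
  by rewrite /B (bigD1 j) //= (bigD1 k) //= -addnA leq_addr.
pose b : int := (2 * B + 1)%N%:Z.
pose e j := \sum_k c j k * b ^+ k.
have eE j : (e j == e j0) = weight_eq c j j0.
  apply/eqP/forallP => [ejj0 k | cjj0]; last first.
    by apply: eq_bigr => k _; rewrite (eqP (cjj0 k)).
  apply/eqP/subr0_eq.
  apply: (@base_digits_eq0 b r (fun l => c j l - c j0 l)) => [|l|].
  - by rewrite /b; lia.
  - by have := cB j l; have := cB j0 l; rewrite /b; lia.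
  - rewrite (eq_bigr _ (fun l _ => mulrBl _ _ _)) sumrB; apply/eqP.
    by rewrite subr_eq0 -/(e j) ejj0.
under eq_bigl => j do rewrite -eE.
apply: exprz_indep => z z0.
transitivity (\sum_j a j * char_val (c j) (fun k => z ^ (b ^+ k))).
  by apply: eq_bigr => j _; rewrite char_val_powers.
by apply: vanish => k; apply: expfz_neq0.
Qed.

Lemma char_val_indep_mx r m p q (c : 'I_m -> 'I_r -> int)
    (M : 'I_m -> 'M[K]_(p, q)) :
  (forall t, torus_pt t -> \sum_j char_val (c j) t *: M j = 0) ->
  forall j0, \sum_(j | weight_eq c j j0) M j = 0.
Proof.
move=> vanish j0; apply/matrixP => i k; rewrite summxE mxE.
apply: (char_val_indep (a := fun j => M j i k)) => t tT.
transitivity ((\sum_j char_val (c j) t *: M j) i k); last by rewrite vanish // mxE.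
by rewrite summxE; apply: eq_bigr => j _; rewrite mxE mulrC.
Qed.

End CharacterIndependence.

Section ZariskiClosure.
Variable K : fieldType.

Definition in_zariski_closure N (S : ('I_N -> K) -> Prop) (u : 'I_N -> K) :=
  forall p : {mpoly K[N]}, (forall v, S v -> p.@[v] = 0) -> p.@[u] = 0.

Lemma zariski_closedP N (S : ('I_N -> K) -> Prop) :
  zariski_closed S <-> forall u, in_zariski_closure S u -> S u.
Proof.
split=> [[P defS] u uS | closedS].
  by apply/defS => p Pp; apply: uS => v /defS; apply.
exists (fun p => forall v, S v -> p.@[v] = 0) => u; split; last exact: closedS.
by move=> Su p; apply.
Qed.

Lemma in_zariski_closure_comp M N (f : 'I_M -> 'I_N)
    (S : ('I_N -> K) -> Prop) (S' : ('I_M -> K) -> Prop) u :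
  (forall v, S v -> S' (v \o f)) ->
  in_zariski_closure S u -> in_zariski_closure S' (u \o f).
Proof.
move=> SS' uS p pS'.
have compE v : (p \mPo [tuple 'X_(f i) | i < M]).@[v] = p.@[v \o f].
  by rewrite comp_mpoly_meval; apply: meval_eq => i; rewrite tnth_mktuple mevalXU.
by rewrite -compE; apply: uS => v Sv; rewrite compE; apply/pS'/SS'.
Qed.

Definition int_pos (z : int) : nat := if z is Posz n then n else 0.
Definition int_neg (z : int) : nat := if z is Negz n then n.+1 else 0.

Lemma exprz_pos_neg (a : K) z : a ^ z = a ^+ int_pos z / a ^+ int_neg z.
Proof. by case: z => n; rewrite /= ?expr0 ?invr1 ?mulr1 ?mul1r. Qed.

Lemma closure_char_relation N r (I : finType) (S : ('I_N -> K) -> Prop)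
    (w : I -> 'I_r -> int) (L : I -> {mpoly K[N]}) u :
  (forall v, S v ->
     exists2 t, torus_pt t & forall i, (L i).@[v] = char_val (w i) t) ->
  in_zariski_closure S u -> (forall i, (L i).@[u] != 0) ->
  forall mu : I -> int, (forall k, \sum_i mu i * w i k = 0) ->
  \prod_i (L i).@[u] ^ mu i = 1.
Proof.
move=> Sw uS Lu0 mu rel.
pose pos v := \prod_i (L i).@[v] ^+ int_pos (mu i).
pose neg v := \prod_i (L i).@[v] ^+ int_neg (mu i).
pose binom := \prod_i L i ^+ int_pos (mu i) - \prod_i L i ^+ int_neg (mu i).
have prodE v : \prod_i (L i).@[v] ^ mu i = pos v / neg v.
  by under eq_bigr do rewrite exprz_pos_neg; rewrite big_split /= prodfV.
have binomE v : binom.@[v] = pos v - neg v.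
  rewrite mevalB !rmorph_prod.
  by congr (_ - _); apply: eq_bigr => i _; rewrite rmorphXn.
have binom_u : binom.@[u] = 0.
  apply: uS => v /Sw[t tT Lt]; rewrite binomE.
  have : \prod_i (L i).@[v] ^ mu i = 1.
    by under eq_bigr do rewrite Lt; apply: char_val_relation.
  by rewrite prodE => /divr1_eq ->; rewrite subrr.
move/eqP: binom_u; rewrite prodE binomE subr_eq0 => /eqP ->.
by apply/divff/prodf_neq0 => i _; rewrite expf_neq0.
Qed.

End ZariskiClosure.

Lemma closure_char_solution (K : closedFieldType) N r (I : finType)
    (S : ('I_N -> K) -> Prop) (w : I -> 'I_r -> int) (L : I -> {mpoly K[N]}) u :
  (forall v, S v ->
     exists2 t, torus_pt t & forall i, (L i).@[v] = char_val (w i) t) ->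
  in_zariski_closure S u -> (forall i, (L i).@[u] != 0) ->
  exists2 t, torus_pt t & forall i, (L i).@[u] = char_val (w i) t.
Proof.
move=> Sw uS Lu0.
have [t tT Lt] := char_system_solvable Lu0 (closure_char_relation Sw uS Lu0).
by exists t => // i; rewrite Lt.
Qed.

Section WeightSpaces.
Variables (K : closedFieldType) (r m n : nat).
Variables (c : 'I_m -> 'I_r -> int) (A : 'I_m -> 'M[K]_n).
Hypothesis hrep : is_rational_rep c A.
Local Notation rho := (rep_mx c A).

Lemma weight_eq_refl j : weight_eq c j j.
Proof. exact/forallP. Qed.

Lemma weight_eq_sym j j' : weight_eq c j j' = weight_eq c j' j.
Proof. by apply/forallP/forallP => e k; rewrite eq_sym e. Qed.

Lemma weight_eq_trans j1 j2 j3 :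
  weight_eq c j1 j2 -> weight_eq c j2 j3 -> weight_eq c j1 j3.
Proof.
by move=> /forallP e12 /forallP e23; apply/forallP => k; rewrite (eqP (e12 k)).
Qed.

Lemma char_val_weight_eq j j' (t : 'I_r -> K) :
  weight_eq c j j' -> char_val (c j) t = char_val (c j') t.
Proof. by move=> /forallP e; apply: eq_bigr => k _; rewrite (eqP (e k)). Qed.

(* Characters may repeat among the c j; the projection onto the weight space of
   c j0 collects all the A j with that character. *)
Definition weight_proj j0 := \sum_(j | weight_eq c j j0) A j.

Lemma weight_proj_eigen (F : 'I_m -> 'M[K]_n) t j0 :
  (forall s, torus_pt s ->
     \sum_j char_val (c j) s *: F j =
     \sum_j (char_val (c j) s * char_val (c j) t) *: A j) ->
  \sum_(j | weight_eq c j j0) F j = char_val (c j0) t *: weight_proj j0.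
Proof.
move=> hF.
have vanish s : torus_pt s ->
    \sum_j char_val (c j) s *: (F j - char_val (c j) t *: A j) = 0.
  move=> sT; rewrite (eq_bigr _ (fun j _ => scalerBr _ _ _)) sumrB hF //.
  by under [X in _ - X]eq_bigr do rewrite scalerA; rewrite subrr.
move/eqP: (char_val_indep_mx vanish j0); rewrite sumrB subr_eq0 => /eqP ->.
by rewrite scaler_sumr; apply: eq_bigr => j jj0; rewrite (char_val_weight_eq _ jj0).
Qed.

Lemma weight_proj_rho j0 t : torus_pt t ->
  weight_proj j0 *m rho t = char_val (c j0) t *: weight_proj j0.
Proof.
move=> tT; rewrite mulmx_suml; apply: weight_proj_eigen => s sT.
rewrite (eq_bigr _ (fun j _ => scalemxAl _ _ _)) -mulmx_suml -(proj2 hrep) //.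
by apply: eq_bigr => j _; rewrite char_valM.
Qed.

Lemma rho_weight_proj j0 t : torus_pt t ->
  rho t *m weight_proj j0 = char_val (c j0) t *: weight_proj j0.
Proof.
move=> tT; rewrite mulmx_sumr; apply: weight_proj_eigen => s sT.
rewrite (eq_bigr _ (fun j _ => scalemxAr _ _ _)) -mulmx_sumr -(proj2 hrep) //.
by apply: eq_bigr => j _; rewrite char_valM mulrC.
Qed.

(* Characteristic zero is used only to divide by the multiplicity of a weight. *)
Hypothesis hchar : [pchar K] =i pred0.

Definition weight_mult j := #|[pred j' | weight_eq c j' j]|.

Lemma weight_mult_neq0 j : (weight_mult j)%:R != 0 :> K.
Proof.
rewrite (proj1 (pcharf0P K) hchar) -lt0n.
by apply/card_gt0P; exists j; rewrite inE weight_eq_refl.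
Qed.

Lemma weight_mult_eq j j' : weight_eq c j j' -> weight_mult j = weight_mult j'.
Proof.
move=> jj'; apply: eq_card => i; rewrite !inE.
by apply/idP/idP => ij; apply: weight_eq_trans ij _; rewrite // weight_eq_sym.
Qed.

Lemma sum_weight_proj : \sum_j (weight_mult j)%:R^-1 *: weight_proj j = 1%:M.
Proof.
rewrite -(proj1 hrep) /rep_mx /weight_proj.
under [RHS]eq_bigr do rewrite char_val1 scale1r.
rewrite (eq_bigr (fun j => \sum_(j' | weight_eq c j' j) (weight_mult j)%:R^-1 *: A j'));
  last by move=> j _; rewrite scaler_sumr.
rewrite (exchange_big_dep xpredT) //=; apply: eq_bigr => j _.
under eq_bigr => j' jj' do rewrite -(weight_mult_eq jj').
rewrite sumr_const -scaler_nat scalerA (_ : #|_| = weight_mult j).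
  by rewrite mulfV ?scale1r ?weight_mult_neq0.
by apply: eq_card => j'; rewrite !inE weight_eq_sym.
Qed.

Lemma weight_proj_inj_l p (a b : 'M[K]_(n, p)) :
  (forall j, weight_proj j *m a = weight_proj j *m b) -> a = b.
Proof.
move=> eq_ab; rewrite -[a]mul1mx -[b]mul1mx -sum_weight_proj !mulmx_suml.
by apply: eq_bigr => j _; rewrite -!scalemxAl eq_ab.
Qed.

Lemma weight_proj_inj_r p (a b : 'M[K]_(p, n)) :
  (forall j, a *m weight_proj j = b *m weight_proj j) -> a = b.
Proof.
move=> eq_ab; rewrite -[a]mulmx1 -[b]mulmx1 -sum_weight_proj !mulmx_sumr.
by apply: eq_bigr => j _; rewrite -!scalemxAr eq_ab.
Qed.

Section WeightCoordinates.
Variables (x : 'cV[K]_n) (y : 'rV[K]_n).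

Lemma weight_proj_orbit_l j t : torus_pt t ->
  weight_proj j *m (rho t *m x) = char_val (c j) t *: (weight_proj j *m x).
Proof. by move=> tT; rewrite mulmxA weight_proj_rho // scalemxAl. Qed.

Lemma weight_proj_orbit_r j t : torus_pt t ->
  y *m rho (fun k => (t k)^-1) *m weight_proj j =
  char_val (fun k => - c j k) t *: (y *m weight_proj j).
Proof.
move=> tT; rewrite -mulmxA rho_weight_proj; last exact: torus_ptV.
by rewrite scalemxAr char_valN.
Qed.

Definition weight_coord (i : ('I_m * 'I_n) + ('I_m * 'I_n)) : {mpoly K[n + n]} :=
  match i with
  | inl (j, k) => \sum_l weight_proj j k l *: 'X_(lshift n l)
  | inr (j, k) => \sum_l weight_proj j l k *: 'X_(rshift n l)
  end.

Definition weight_coord_char (i : ('I_m * 'I_n) + ('I_m * 'I_n)) : 'I_r -> int :=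
  match i with inl (j, _) => c j | inr (j, _) => fun k => - c j k end.

Definition weight_coord_xy (i : ('I_m * 'I_n) + ('I_m * 'I_n)) : K :=
  match i with
  | inl (j, k) => (weight_proj j *m x) k 0
  | inr (j, k) => (y *m weight_proj j) 0 k
  end.

Lemma meval_weight_coord_l j k (v : 'I_(n + n) -> K) :
  (weight_coord (inl (j, k))).@[v] = (weight_proj j *m \col_l v (lshift n l)) k 0.
Proof.
by rewrite raddf_sum mxE; apply: eq_bigr => l _; rewrite /= mevalZ mevalXU mxE.
Qed.

Lemma meval_weight_coord_r j k (v : 'I_(n + n) -> K) :
  (weight_coord (inr (j, k))).@[v] = (\row_l v (rshift n l) *m weight_proj j) 0 k.
Proof.
by rewrite raddf_sum mxE; apply: eq_bigr => l _; rewrite /= mevalZ mevalXU mxE mulrC.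
Qed.

Lemma meval_weight_coord_orbit (v : 'I_(n + n) -> K) s s' i :
  torus_pt s -> torus_pt s' ->
  (forall l, v (lshift n l) = (rho s *m x) l 0) ->
  (forall l, v (rshift n l) = (y *m rho (fun k => (s' k)^-1)) 0 l) ->
  (weight_coord i).@[v] =
  char_val (weight_coord_char i) (if i is inl _ then s else s') * weight_coord_xy i.
Proof.
move=> sT s'T vl vr; case: i => [[j k] | [j k]].
  rewrite meval_weight_coord_l (_ : \col_l _ = rho s *m x).
    by rewrite weight_proj_orbit_l // mxE.
  by apply/matrixP => l l0; rewrite ord1 mxE vl.
rewrite meval_weight_coord_r (_ : \row_l _ = y *m rho (fun k => (s' k)^-1)).
  by rewrite weight_proj_orbit_r // mxE.
by apply/matrixP => l0 l; rewrite ord1 mxE vr.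
Qed.

Lemma orbit_of_weight_coords (u : 'I_(n + n) -> K) t : torus_pt t ->
  (forall i, (weight_coord i).@[u] =
     char_val (weight_coord_char i) t * weight_coord_xy i) ->
  orbit_VVdual c A x y u.
Proof.
move=> tT ut; exists t; split=> //.
have uL : \col_l u (lshift n l) = rho t *m x.
  apply: weight_proj_inj_l => j; apply/matrixP => k l0; rewrite ord1.
  by rewrite -meval_weight_coord_l ut weight_proj_orbit_l // mxE.
have uR : \row_l u (rshift n l) = y *m rho (fun k => (t k)^-1).
  apply: weight_proj_inj_r => j; apply/matrixP => l0 k; rewrite ord1.
  by rewrite -meval_weight_coord_r ut weight_proj_orbit_r // mxE.
by split=> l; [rewrite -uL | rewrite -uR]; rewrite mxE.
Qed.

End WeightCoordinates.

End WeightSpaces.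

Theorem lemma3p9 (K : closedFieldType) (hchar : [pchar K] =i pred0)
  (r m n : nat) (c : 'I_m -> 'I_r -> int) (A : 'I_m -> 'M[K]_n)
  (hrep : is_rational_rep c A)
  (x : 'cV[K]_n) (y : 'rV[K]_n)
  (hmu : forall xi : 'I_r -> K, moment_map c A x y xi = 0)
  (hx : zariski_closed (orbit_V c A x))
  (hy : zariski_closed (orbit_Vdual c A y)) :
  zariski_closed (orbit_VVdual c A x y).
Proof.
apply/zariski_closedP => u uO.
have [s [sT us]] : orbit_V c A x (u \o lshift n).
  apply: (zariski_closedP _).1 hx _ (in_zariski_closure_comp _ uO).
  by move=> v [t [tT [vl _]]]; exists t.
have [s' [s'T us']] : orbit_Vdual c A y (u \o @rshift n n).
  apply: (zariski_closedP _).1 hy _ (in_zariski_closure_comp _ uO).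
  by move=> v [t [tT [_ vr]]]; exists t.
have u_coord i := meval_weight_coord_orbit hrep i sT s'T us us'.
pose I := {i | weight_coord_xy c A x y i != 0}.
pose L (i : I) := (weight_coord_xy c A x y (val i))^-1 *: weight_coord c A (val i).
have [t tT ut] : exists2 t, torus_pt t &
    forall i : I, (L i).@[u] = char_val (weight_coord_char c (val i)) t.
  apply: (closure_char_solution (L := L)
           (w := fun i => weight_coord_char c (val i)) _ uO).
    move=> v [t [tT [vl vr]]].
    exists t => // i; rewrite mevalZ (meval_weight_coord_orbit hrep _ tT tT vl vr).
    by case: i => -[] ? /= xy0; rewrite mulrCA mulVf ?mulr1.
  move=> [i xy0]; rewrite mevalZ u_coord /= !mulf_neq0 ?invr_eq0 //.
  by case: i {xy0} => ?; apply: char_val_neq0.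
apply: (orbit_of_weight_coords hrep hchar tT) => i.
have [xy0 | xy_neq0] := eqVneq (weight_coord_xy c A x y i) 0.
  by rewrite u_coord xy0 !mulr0.
have := ut (exist _ i xy_neq0); rewrite mevalZ /= => <-.
by rewrite mulrAC mulVf ?mul1r.
Qed.
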